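(* The Goldman Lie algebra $\mathfrak{G}_{\Sigma_{1,0}}$ of the closed torus over $\mathbb{Q}$ is generated, as a Lie algebra over $\mathbb{Q}$, by the three elements $a$, $a^{-1}b^{-1}+b+1$, and $b$.
   Context: Let $\Sigma_{1,0}=T^2$ be the closed oriented torus and $\hat\pi$ its set of free homotopy classes of loops, identified with $\pi_1(T^2)\cong\mathbb{Z}^2$; with $a,b$ the standard generators, every class is written $a^ib^j$, $(i,j)\in\mathbb{Z}^2$, and $1=a^0b^0$ is the class of the contractible loop. The Goldman bracket (defined for classes meeting transversally by $[\alpha,\beta]=\sum_{p\in\alpha\cap\beta}\epsilon(p)\,\alpha*_p\beta$, with $\epsilon(p)$ the intersection sign and $\alpha*_p\beta$ the loop product at $p$, extended bilinearly) is given on the torus by $[a^ib^j,a^kb^l]=(il-jk)\,a^{i+k}b^{j+l}$. $\mathfrak{G}_{\Sigma_{1,0}}$ denotes the $\mathbb{Q}$-vector space with basis $\hat\pi$ with this bracket. *)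

(* multinomials' monoid algebra {malg R[K]} = finitely
   supported functions K -> R, used as the free Q-vector space on pi-hat. *)
From HB Require Import structures.
From mathcomp Require Import all_boot all_order all_algebra.
From mathcomp Require Import finmap.
From mathcomp Require Import monalg.
Set Implicit Arguments. Unset Strict Implicit. Unset Printing Implicit Defensive.
Import Order.TTheory GRing.Theory Num.Theory.
Local Open Scope ring_scope.

(* free homotopy classes of loops on T^2 : a^i b^j <-> (i, j) in Z^2 *)
Definition pihat := (int * int)%type.

Definition goldman := {malg rat[pihat]}.

Definition cls (i j : int) : goldman := << ((i, j) : pihat) >>.

Definition gbracket (x y : goldman) : goldman :=
  \sum_(p <- msupp x) \sum_(q <- msupp y)
     << (x@_p * y@_q * ((p.1 * q.2 - p.2 * q.1)%:~R : rat)) *g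
        ((p.1 + q.1, p.2 + q.2) : pihat) >>.

Inductive lie_generated (S : goldman -> Prop) : goldman -> Prop :=
  | lg_gen x : S x -> lie_generated S x
  | lg_zero : lie_generated S 0
  | lg_add x y : lie_generated S x -> lie_generated S y -> lie_generated S (x + y)
  | lg_scale (c : rat) x : lie_generated S x -> lie_generated S (c *: x)
  | lg_bracket x y : lie_generated S x -> lie_generated S y ->
      lie_generated S (gbracket x y).

(* The bracket with a basis class multiplies a class by a determinant and
   translates it, so once the classes a^(±1), b^(±1) are available every class
   a^i b^j with i != 0 (resp. j != 0) can be moved along the line through it in
   direction b (resp. a).  The contractible class 1 is central, hence
   [a^-1 b^-1 + b + 1, -] - [b, -] = [a^-1 b^-1, -], which lowers both exponents
   of a^k b^l (scaled by k - l).  This yields b^-1 from a and a^-1 from b, then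
   a^-1 b^-1 = [a^-1, b^-1], then 1 = (a^-1 b^-1 + b + 1) - b - a^-1 b^-1, and
   finally every class, hence every element. *)
From HB Require Import structures.
From mathcomp Require Import all_boot all_order all_algebra ring.
From mathcomp Require Import finmap.
From mathcomp Require Import monalg.
Set Implicit Arguments. Unset Strict Implicit. Unset Printing Implicit Defensive.
Import Order.TTheory GRing.Theory Num.Theory.
Local Open Scope ring_scope.

Lemma monalgUZ (R : nzRingType) (K : choiceType) (c : R) (k : K) :
  << c *g k >> = c *: << k >> :> {malg R[K]}.
Proof.
apply/malgP => k'; rewrite mcoeffZ !mcoeffU.
by case: eqP => _; rewrite ?mulr1n ?mulr0n ?mulr1 ?mulr0.
Qed.

Definition gbracket_term (x y : goldman) (p q : pihat) : goldman :=
  << (x@_p * y@_q * ((p.1 * q.2 - p.2 * q.1)%:~R : rat)) *g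
        ((p.1 + q.1, p.2 + q.2) : pihat) >>.

Lemma gbracket_supp_le (d1 d2 : {fset pihat}) x y :
  (msupp x `<=` d1)%fset -> (msupp y `<=` d2)%fset ->
  gbracket x y = \sum_(p <- d1) \sum_(q <- d2) gbracket_term x y p q.
Proof.
move=> le1 le2; rewrite /gbracket (big_fset_incl _ le1) /=.
  apply/eq_bigr=> p _; apply/big_fset_incl => // q _ /mcoeff_outdom ->.
  by rewrite /gbracket_term mulr0 mul0r monalgU0.
move=> p _ /mcoeff_outdom xp.
by rewrite big1 => // q _; rewrite /gbracket_term xp !mul0r monalgU0.
Qed.

Lemma gbracketDl x1 x2 y : gbracket (x1 + x2) y = gbracket x1 y + gbracket x2 y.
Proof.
have le_y := fsubset_refl (msupp y).
rewrite (gbracket_supp_le (msuppD_le x1 x2) le_y).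
rewrite (gbracket_supp_le (fsubsetUl (msupp x1) (msupp x2)) le_y).
rewrite (gbracket_supp_le (fsubsetUr (msupp x1) (msupp x2)) le_y).
rewrite -big_split /=; apply: eq_bigr => p _; rewrite -big_split /=.
by apply: eq_bigr => q _; rewrite /gbracket_term mcoeffD !mulrDl monalgUD.
Qed.

Lemma gbracket_cls i j k l :
  gbracket (cls i j) (cls k l) = ((i * l - j * k)%:~R : rat) *: cls (i + k) (j + l).
Proof.
by rewrite /gbracket /cls !msuppU oner_eq0 !big_seq_fset1 /= !mcoeffUU !mul1r monalgUZ.
Qed.

Lemma gbracket_cls00l y : gbracket (cls 0 0) y = 0.
Proof.
rewrite /gbracket /cls msuppU oner_eq0 big_seq_fset1 /=.
by apply: big1 => q _; rewrite !mul0r subrr mulr0 monalgU0.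
Qed.

Lemma gbracket_addr_cls00l x y : gbracket (x + cls 0 0) y = gbracket x y.
Proof. by rewrite gbracketDl gbracket_cls00l addr0. Qed.

Section LieGenerated.

Variable S : goldman -> Prop.
Local Notation L := (lie_generated S).

Lemma lie_generatedB x y : L x -> L y -> L (x - y).
Proof. by move=> Lx Ly; rewrite -scaleN1r; apply: lg_add => //; apply: lg_scale. Qed.

Lemma lie_generated_addKl x y : L (x + y) -> L x -> L y.
Proof. by move=> Lxy Lx; rewrite -(addKr x y) addrC; apply: lie_generatedB. Qed.

Lemma lie_generated_scaleK (c : rat) x : c != 0 -> L (c *: x) -> L x.
Proof. by move=> c0 Lcx; rewrite -(scale1r x) -(mulVf c0) -scalerA; apply: lg_scale. Qed.

Lemma lie_generated_clsD i j k l : L (cls i j) -> L (cls k l) ->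
  i * l - j * k != 0 -> L (cls (i + k) (j + l)).
Proof.
move=> Lij Lkl det_neq0; apply: (@lie_generated_scaleK (i * l - j * k)%:~R).
  by rewrite intr_eq0.
by rewrite -gbracket_cls; apply: lg_bracket.
Qed.

(* The determinant against the direction (u, v) does not change along the line. *)
Lemma lie_generated_cls_line u v i j :
  L (cls u v) -> L (cls (- u) (- v)) -> i * v - j * u != 0 -> L (cls i j) ->
  forall n : int, L (cls (i + n * u) (j + n * v)).
Proof.
move=> Luv Luv' det_neq0 Lij n.
have det_fwd m : (i + m * u) * v - (j + m * v) * u = i * v - j * u by ring.
have det_bwd m : (i + m * u) * - v - (j + m * v) * - u = - (i * v - j * u) by ring.
elim/int_ind: n => [|n IH|n IH]; first by rewrite !mul0r !addr0.
  have := lie_generated_clsD IH Luv; rewrite det_fwd => /(_ det_neq0).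
  by rewrite -addn1 PoszD !mulrDl !mul1r !addrA.
have := lie_generated_clsD IH Luv'; rewrite det_bwd oppr_eq0 => /(_ det_neq0).
by rewrite -addn1 PoszD !opprD !mulrDl !mulN1r !addrA.
Qed.

Lemma lie_generated_all : (forall i j, L (cls i j)) -> forall x, L x.
Proof.
move=> Lcls x; rewrite (monalgE x); apply: big_rec => [|[i j] y _ Ly].
  exact: lg_zero.
by apply: lg_add => //; rewrite monalgUZ; apply: lg_scale; apply: Lcls.
Qed.

End LieGenerated.

Definition torus_gens (y : goldman) : Prop :=
  y = cls 1 0 \/ y = cls (-1) (-1) + cls 0 1 + cls 0 0 \/ y = cls 0 1.
Local Notation L := (lie_generated torus_gens).

Lemma torus_a : L (cls 1 0). Proof. by apply: lg_gen; left. Qed.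
Lemma torus_b : L (cls 0 1). Proof. by apply: lg_gen; right; right. Qed.
Lemma torus_c : L (cls (-1) (-1) + cls 0 1 + cls 0 0).
Proof. by apply: lg_gen; right; left. Qed.

Lemma torus_abV_bracket k l : L (cls k l) -> k != l -> L (cls (k - 1) (l - 1)).
Proof.
move=> Lkl; rewrite -subr_eq0 => kl_neq0.
have L_abV_bracket : L (gbracket (cls (-1) (-1)) (cls k l)).
  have := lie_generatedB (lg_bracket torus_c Lkl) (lg_bracket torus_b Lkl).
  by rewrite gbracket_addr_cls00l gbracketDl addrK.
apply: (@lie_generated_scaleK _ (k - l)%:~R); first by rewrite intr_eq0.
have det_abV : -1 * l - -1 * k = k - l by ring.
by move: L_abV_bracket; rewrite gbracket_cls det_abV ![-1 + _]addrC.
Qed.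

Lemma torus_bV : L (cls 0 (-1)).
Proof. by have := torus_abV_bracket torus_a; rewrite subrr sub0r; apply. Qed.

Lemma torus_aV : L (cls (-1) 0).
Proof. by have := torus_abV_bracket torus_b; rewrite subrr sub0r; apply. Qed.

Lemma torus_abV : L (cls (-1) (-1)).
Proof. by have := lie_generated_clsD torus_aV torus_bV; rewrite addr0 add0r; apply. Qed.

Lemma torus_one : L (cls 0 0).
Proof.
apply: (lie_generated_addKl torus_c).
by apply: lg_add; [exact: torus_abV | exact: torus_b].
Qed.

Lemma torus_cls_vertical i j : i != 0 -> L (cls i j) -> forall l, L (cls i l).
Proof.
move=> i_neq0 Lij l.
have det_neq0 : i * 1 - j * 0 != 0 by rewrite mulr1 mulr0 subr0.
have := lie_generated_cls_line torus_b torus_bV det_neq0 Lij (l - j).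
by rewrite !mulr0 mulr1 addr0 [j + _]addrC subrK.
Qed.

Lemma torus_cls_horizontal i j : j != 0 -> L (cls i j) -> forall k, L (cls k j).
Proof.
move=> j_neq0 Lij k.
have det_neq0 : i * 0 - j * 1 != 0 by rewrite mulr1 mulr0 sub0r oppr_eq0.
have := lie_generated_cls_line torus_a torus_aV det_neq0 Lij (k - i).
by rewrite !mulr0 mulr1 addr0 [i + _]addrC subrK.
Qed.

Lemma torus_cls i j : L (cls i j).
Proof.
have La l : L (cls 1 l) := torus_cls_vertical (oner_neq0 _) torus_a l.
have [->|j_neq0] := eqVneq j 0; last exact: torus_cls_horizontal (La j) i.
have [->|i_neq0] := eqVneq i 0; first exact: torus_one.
exact: torus_cls_vertical i_neq0 (torus_cls_horizontal (oner_neq0 _) (La 1) i) 0.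
Qed.

Theorem mainTheorem2 :
  forall x : goldman,
    lie_generated
      (fun y => y = cls 1 0 \/ y = cls (-1) (-1) + cls 0 1 + cls 0 0 \/ y = cls 0 1)
      x.
Proof. exact: lie_generated_all torus_cls. Qed.
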